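(* Let $T$ be a tree and $\alpha\ne\beta\in V(T)$, and let $\gamma_0=\alpha,\gamma_1,\dots,\gamma_{k-1},\gamma_k=\beta$ be the successive vertices of the unique minimal path in $T$ from $\alpha$ to $\beta$. Then inside $\mathsf L_T$, the Euclidean spaces $\mathsf L_T(\alpha)$ and $\mathsf L_T(\beta)$ are glued along closed quadrants, where a point $\{x_\gamma(\alpha)\}$ of $\mathsf L_T(\alpha)$ is identified with a point $\{x_\gamma(\beta)\}$ of $\mathsf L_T(\beta)$ whenever $$x_{\gamma_1}(\alpha)=x_\alpha(\beta),\ x_{\gamma_2}(\alpha)=x_{\gamma_1}(\beta),\ \dots,\ x_{\gamma_{k-1}}(\alpha)=x_{\gamma_{k-2}}(\beta),\ x_\beta(\alpha)=x_{\gamma_{k-1}}(\beta)\ge0,$$ and $x_\gamma(\alpha)=x_\gamma(\beta)$ for all $\gamma\notin\{\alpha,\gamma_1,\dots,\gamma_{k-1},\beta\}$.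
   Context: A tree is a nonempty finite connected acyclic graph with vertex set $V(T)$ and edge set $E(T)$ (two-element subsets of $V(T)$). Arboreal singularity: for $\alpha\in V(T)$ let $\mathsf L_T(\alpha)=\mathbb R^{V(T)\setminus\{\alpha\}}$ with coordinates $x_\gamma(\alpha)$, $\gamma\ne\alpha$; $\mathsf L_T$ is the quotient of $\coprod_{\alpha\in V(T)}\mathsf L_T(\alpha)$ by the equivalence relation generated by the $\{\alpha,\beta\}$-edge gluings, for $\{\alpha,\beta\}\in E(T)$: $\{x_\gamma(\alpha)\}\sim\{x_\gamma(\beta)\}$ whenever $x_\beta(\alpha)=x_\alpha(\beta)\ge0$ and $x_\gamma(\alpha)=x_\gamma(\beta)$ for all $\gamma\ne\alpha,\beta$. *)

From mathcomp Require Import all_boot.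
From Stdlib Require Import Reals.
From Stdlib Require Relations.
Set Implicit Arguments. Unset Strict Implicit. Unset Printing Implicit Defensive.

Definition simple_graph (V : finType) (e : rel V) : Prop :=
  symmetric e /\ irreflexive e.

Definition is_tree (V : finType) (e : rel V) : Prop :=
  [/\ simple_graph e,
      (0 < #|V|)%N,
      (forall x y : V, connect e x y) &
      (forall (x : V) (s : seq V),
          uniq (x :: s) -> (2 <= size s)%N -> path e x s -> ~~ e (last x s) x)].

(* s = [:: g_1; ...; g_k] such that a = g_0, g_1, ..., g_k = b is a path of
   minimal length from a to b. *)
Definition is_min_path (V : finType) (e : rel V) (a b : V) (s : seq V) : Prop :=
  [/\ path e a s, last a s = b &
      forall s' : seq V, path e a s' -> last a s' = b -> (size s <= size s')%N].

(* Chart L_T(a) = R^(V \ {a}) ; points of the disjoint union. *)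
Definition chart (V : finType) (a : V) : Type := {v : V | v != a} -> R.
Definition Lpt (V : finType) : Type := {a : V & chart a}.

(* coordinate x_g(a) of x : chart a, for g != a (value 0 at g = a, unused). *)
Definition coord (V : finType) (a : V) (x : chart a) (g : V) : R :=
  match insub g with Some u => x u | None => 0%R end.

Definition edge_glue (V : finType) (e : rel V) (p q : Lpt V) : Prop :=
  let: existT a x := p in let: existT b y := q in
  [/\ e a b, coord x b = coord y a, (0 <= coord x b)%R &
      forall g : V, g != a -> g != b -> coord x g = coord y g].

(* The equivalence relation generated by the edge gluings; L_T is the
   quotient of Lpt V by it. *)
Definition Lequiv (V : finType) (e : rel V) : Lpt V -> Lpt V -> Prop :=
  Relation_Operators.clos_refl_sym_trans (Lpt V) (@edge_glue V e).

Definition pt (V : finType) (a : V) (x : chart a) : Lpt V :=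
  existT (fun c => chart c) a x.

(* Root the tree at b and let depth c be the distance from c to b. Every vertex c <> b
   has a neighbour one level closer to b; acyclicity makes it unique, since two such
   neighbours together with their own ways down to b would close a cycle. Pushing a point
   of L_T(c) across the edges c -> parent c -> ... -> b, as long as each crossing meets
   its sign condition, gives a normal form in L_T(b) or fails. An edge gluing is always
   such a push or the inverse of one, so the normal form is an invariant of the
   equivalence relation, and every point is equivalent to its normal form. Along the
   minimal path from a to b the pushes shift the coordinates by one place along the path,
   which is exactly the gluing in the statement. *)

From mathcomp Require Import all_boot.
From Stdlib Require Import Reals.
From Stdlib Require Relations.
From Stdlib Require Import Relation_Operators.
From Stdlib Require Import FunctionalExtensionality.
Set Implicit Arguments. Unset Strict Implicit. Unset Printing Implicit Defensive.

Section Crossing.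
Variable V : eqType.
Implicit Types (c d w : V) (s : seq V) (f g : V -> R).

(* Transition map of the {c,d}-edge gluing from L_T(c) to L_T(d), on coordinate
   functions V -> R that vanish at the chart's own vertex. *)
Definition cross c d f : V -> R :=
  fun w => if w == d then 0%R else if w == c then f d else f w.

Lemma cross_other c d f w : w != c -> w != d -> cross c d f w = f w.
Proof. by move=> /negPf wc /negPf wd; rewrite /cross wc wd. Qed.

Lemma cross_in c d f s : c \notin s -> d \notin s -> {in s, cross c d f =1 f}.
Proof.
by move=> cs ds z zs; apply: cross_other; [apply: contraNneq cs | apply: contraNneq ds] => <-.
Qed.

Lemma cross_cross c d f : c != d -> f c = 0%R -> cross d c (cross c d f) = f.
Proof.
move=> /negPf cd fc; apply: functional_extensionality => w; rewrite /cross.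
case: (eqVneq w c) => [->|/negPf wc]; first by rewrite fc.
by case: (eqVneq w d) => [->|/negPf wd]; rewrite ?cd ?eqxx ?wc ?wd.
Qed.

Fixpoint cross_path c s f : V -> R :=
  if s is d :: s' then cross_path d s' (cross c d f) else f.

Fixpoint pos_path c s f : Prop :=
  if s is d :: s' then (0 <= f d)%R /\ pos_path d s' (cross c d f) else True.

Definition shifted_along c s f g : Prop :=
  [/\ forall i, i < size s -> g (nth c (c :: s) i) = f (nth c s i),
      g (last c s) = 0%R &
      forall w, w \notin c :: s -> g w = f w].

Lemma cross_path_shifted c s f :
  uniq (c :: s) -> f c = 0%R -> shifted_along c s f (cross_path c s f).
Proof.
elim: s c f => [|d s IH] c f /=; first by move=> _ fc; split=> // w.
rewrite inE negb_or -andbA => /and4P[cd cs ds us] fc.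
have cross_d : cross c d f d = 0%R by rewrite /cross eqxx.
have ud : uniq (d :: s) by rewrite /= ds us.
have [IHnth IHlast IHout] := IH d (cross c d f) ud cross_d.
split=> //.
- case=> [|i] /= lt_i; first by rewrite IHout /= ?inE ?negb_or ?cd ?cs // /cross (negPf cd) eqxx.
  rewrite [nth c (d :: s) i](set_nth_default d) ?IHnth //; last exact: ltnW.
  by rewrite [nth c s i](set_nth_default d) // (cross_in f cs ds) // mem_nth.
- move=> w; rewrite !inE !negb_or => /and3P[wc wd ws].
  by rewrite IHout ?inE ?negb_or ?wd // cross_other.
Qed.

Lemma shifted_along_unique c s f g g' :
  shifted_along c s f g -> shifted_along c s f g' -> g = g'.
Proof.
move=> [g_nth g_last g_out] [g'_nth g'_last g'_out].
apply: functional_extensionality => w.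
have [w_path|w_out] := boolP (w \in c :: s); last by rewrite g_out ?g'_out.
rewrite -(nth_index c w_path).
move: w_path; rewrite -index_mem ltnS leq_eqVlt => /orP[/eqP i_last | i_lt].
  by rewrite i_last -last_nth g_last g'_last.
by rewrite g_nth ?g'_nth.
Qed.

Lemma cross_pathP c s f g : uniq (c :: s) -> f c = 0%R ->
  cross_path c s f = g <-> shifted_along c s f g.
Proof.
move=> u fc; split=> [<-|]; first exact: cross_path_shifted.
exact/shifted_along_unique/cross_path_shifted.
Qed.

Lemma pos_pathP c s f :
  uniq (c :: s) -> pos_path c s f <-> {in s, forall z, (0 <= f z)%R}.
Proof.
elim: s c f => [|d s IH] c f /=; first by split=> // _ z.
rewrite inE negb_or -andbA => /and4P[cd cs ds us].
rewrite IH /= ?ds //; split=> [[fd pos_s] z | pos_ds].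
  by rewrite inE => /predU1P[-> // | zs]; rewrite -(cross_in f cs ds zs); apply: pos_s.
split=> [|z zs]; first exact/pos_ds/mem_head.
by rewrite (cross_in f cs ds zs); apply/pos_ds; rewrite inE zs orbT.
Qed.
End Crossing.

Section Points.
Variable V : finType.
Implicit Types (c : V) (f : V -> R).

Definition point_of c f : Lpt V := pt (fun u : {v : V | v != c} => f (val u)).

Lemma coord_hole c (x : chart c) : coord x c = 0%R.
Proof. by rewrite /coord; case: insubP => //= u; rewrite eqxx. Qed.

Lemma coord_val c f w : w != c -> coord (fun u : {v : V | v != c} => f (val u)) w = f w.
Proof. by move=> wc; rewrite /coord insubT. Qed.

Lemma pt_coord c (x : chart c) : pt x = point_of c (coord x).
Proof.
rewrite /point_of; congr pt; apply: functional_extensionality => u.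
by rewrite /coord valK.
Qed.

End Points.

Section Depth.
Variables (V : finType) (e : rel V) (b : V).
Hypothesis reaches_b : forall c, connect e c b.
Implicit Types (c d : V) (s : seq V).

Definition walk_of_size c n : bool :=
  [exists t : n.-tuple V, path e c t && (last c t == b)].

Lemma walk_of_sizeP c n :
  reflect (exists2 s, path e c s & last c s = b /\ size s = n) (walk_of_size c n).
Proof.
apply: (iffP existsP) => [[t /andP[p_t /eqP l_t]] | [s p_s [l_s <-]]].
  by exists t; rewrite ?size_tuple.
by exists (in_tuple s); rewrite /= p_s l_s eqxx.
Qed.

Lemma exists_walk_size c : exists n, walk_of_size c n.
Proof.
have /connectP[s p_s l_s] := reaches_b c.
by exists (size s); apply/walk_of_sizeP; exists s.
Qed.

Definition depth c : nat := ex_minn (exists_walk_size c).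

Lemma depth_walk c : walk_of_size c (depth c).
Proof. by rewrite /depth; case: ex_minnP. Qed.

Lemma depth_min c n : walk_of_size c n -> depth c <= n.
Proof. by rewrite /depth; case: ex_minnP => m _; apply. Qed.

Lemma depth_eq0 c : (depth c == 0) = (c == b).
Proof.
case: (eqVneq c b) => [->|cb].
  by rewrite -leqn0 depth_min //; apply/walk_of_sizeP; exists [::].
have /walk_of_sizeP[[|d s] _ [l_s <-]] := depth_walk c => //.
by move: cb; rewrite -l_s eqxx.
Qed.

Lemma depth_edge c d : e c d -> depth c <= (depth d).+1.
Proof.
move=> cd; have /walk_of_sizeP[s p_s [l_s s_s]] := depth_walk d.
by apply: depth_min; apply/walk_of_sizeP; exists (d :: s); rewrite /= ?cd ?s_s.
Qed.

Lemma exists_lower_neighbour c : c != b -> exists d, e c d && (depth d < depth c).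
Proof.
move=> cb; have /walk_of_sizeP[[|d s] /= p_s [l_s s_s]] := depth_walk c.
  by rewrite l_s eqxx in cb.
case/andP: p_s => cd p_s; exists d; rewrite cd -s_s ltnS.
by apply: depth_min; apply/walk_of_sizeP; exists s.
Qed.

Definition parent c : V := odflt c [pick d | e c d && (depth d < depth c)].

Lemma parentP c : c != b -> e c (parent c) /\ depth c = (depth (parent c)).+1.
Proof.
move=> cb; rewrite /parent; case: pickP => [d /andP[cd lt_dc] | none] /=.
  by split=> //; apply/eqP; rewrite eqn_leq depth_edge.
by case: (exists_lower_neighbour cb) => d; rewrite none.
Qed.

Lemma min_path_depth c s : is_min_path e c b s -> depth c = size s.
Proof.
case=> p_s l_s s_min; apply/eqP; rewrite eqn_leq depth_min; last first.
  by apply/walk_of_sizeP; exists s.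
by have /walk_of_sizeP[s' p_s' [l_s' <-]] := depth_walk c; apply: s_min.
Qed.

Lemma min_path_cons c d s : is_min_path e c b (d :: s) -> e c d /\ is_min_path e d b s.
Proof.
case=> /= /andP[cd p_s] l_s s_min; split=> //; split=> // s' p_s' l_s'.
by rewrite -ltnS; apply: (s_min (d :: s')); rewrite /= ?cd.
Qed.

Lemma min_path_depth_lt c s : is_min_path e c b s -> {in s, forall z, depth z < depth c}.
Proof.
elim: s c => [|d s IH] c p_cs z //; have [_ p_ds] := min_path_cons p_cs.
rewrite (min_path_depth p_cs) /= -(min_path_depth p_ds) ltnS.
by rewrite inE => /predU1P[-> // | zs]; apply/ltnW/IH.
Qed.

Lemma min_path_uniq c s : is_min_path e c b s -> uniq (c :: s).
Proof.
elim: s c => [|d s IH] c p_cs //; have [_ p_ds] := min_path_cons p_cs.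
rewrite cons_uniq IH // andbT.
by apply/negP => /(min_path_depth_lt p_cs); rewrite ltnn.
Qed.

(* [None] records a crossing whose sign condition fails. *)
Fixpoint push_to_root n c (f : V -> R) : option (V -> R) :=
  if n is n'.+1 then
    if Rle_dec 0 (f (parent c)) then push_to_root n' (parent c) (cross c (parent c) f)
    else None
  else Some f.

Definition to_root c f : option (V -> R) := push_to_root (depth c) c f.

Lemma to_root_b f : to_root b f = Some f.
Proof.
have /eqP depth_b : depth b == 0 by rewrite depth_eq0.
by rewrite /to_root depth_b.
Qed.

Lemma to_root_parent c f : c != b ->
  to_root c f =
  if Rle_dec 0 (f (parent c)) then to_root (parent c) (cross c (parent c) f) else None.
Proof. by move=> cb; rewrite /to_root (parentP cb).2. Qed.

Lemma Lequiv_to_root c f g : to_root c f = Some g -> Lequiv e (point_of c f) (point_of b g).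
Proof.
move: {2}(depth c) (erefl (depth c)) => n; elim: n c f => [|n IH] c f depth_c.
  by move/eqP: depth_c; rewrite depth_eq0 => /eqP->; rewrite to_root_b => -[->]; apply: rst_refl.
have cb : c != b by rewrite -depth_eq0 depth_c.
have [c_pc depth_pc] := parentP cb; set d := parent c in c_pc depth_pc *.
rewrite to_root_parent //; case: Rle_dec => // fd0 root_d.
apply: (rst_trans _ _ _ (point_of d (cross c d f))); last first.
  by apply: IH root_d; move: depth_pc; rewrite depth_c => -[].
have cd : c != d by apply/eqP => cd; move: depth_pc; rewrite {1}cd; apply: n_Sn.
apply: rst_step; rewrite /edge_glue /= coord_val 1?eq_sym // coord_val //.
split=> // [|w wc wd]; first by rewrite /cross (negPf cd) eqxx.
by rewrite !coord_val // cross_other.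
Qed.
End Depth.

Section Tree.
Variables (V : finType) (e : rel V) (b : V).
Hypothesis tree_e : is_tree e.
Implicit Types (c d u v : V) (s w : seq V) (f g : V -> R).

Let e_sym : symmetric e. Proof. by case: tree_e => [[]]. Qed.
Let e_irr : irreflexive e. Proof. by case: tree_e => [[]]. Qed.
Let reaches_b c : connect e c b. Proof. by case: tree_e => _ _ /(_ c b). Qed.
Let e_acyclic c s : uniq (c :: s) -> 2 <= size s -> path e c s -> ~~ e (last c s) c.
Proof. by case: tree_e => _ _ _; apply. Qed.

Local Notation depth := (depth reaches_b).
Local Notation parent := (parent reaches_b).
Local Notation to_root := (to_root reaches_b).

(* Moving both endpoints to their parents either closes a cycle or reproduces the
   situation one level lower. *)
Lemma no_path_above_level n u v w :
  depth u = n -> depth v = n -> u != v -> {in w, forall z, n < depth z} ->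
  uniq (v :: w) -> ~~ path e v (rcons w u).
Proof.
elim: n => [|n IH] in u v w *.
  by move=> /eqP; rewrite depth_eq0 => /eqP-> /eqP; rewrite depth_eq0 => /eqP->; rewrite eqxx.
move=> depth_u depth_v uv w_above; rewrite cons_uniq => /andP[vw w_uniq].
have [ub vb] : u != b /\ v != b by rewrite -!(depth_eq0 reaches_b) depth_u depth_v.
have [u_pu] := parentP reaches_b ub; rewrite depth_u => -[/esym depth_pu].
have [v_pv] := parentP reaches_b vb; rewrite depth_v => -[/esym depth_pv].
have uw' : u \notin w by apply/negP => /w_above; rewrite depth_u ltnn.
have above : {in v :: rcons w u, forall z, n < depth z}.
  move=> z; rewrite inE mem_rcons inE => /or3P[/eqP-> | /eqP-> | /w_above/ltnW //].
    by rewrite depth_v.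
  by rewrite depth_u.
have uniq_below z : depth z = n -> uniq (z :: v :: rcons w u).
  move=> depth_z; rewrite cons_uniq (contra (above z)) /=; last by rewrite depth_z ltnn.
  by rewrite rcons_uniq uw' w_uniq mem_rcons inE (negPf vw) (eq_sym v) (negPf uv).
apply/negP => p_vwu; case: (eqVneq (parent u) (parent v)) => [pu_pv | pu_pv].
  have := e_acyclic (uniq_below _ depth_pu); rewrite /= size_rcons last_rcons u_pu.
  by rewrite pu_pv e_sym v_pv p_vwu => /(_ isT isT).
have := IH _ _ (v :: rcons w u) depth_pu depth_pv pu_pv above (uniq_below _ depth_pv).
by rewrite rcons_path /= e_sym v_pv p_vwu last_rcons u_pu.
Qed.

Lemma parent_unique c d : e c d -> depth d < depth c -> parent c = d.
Proof.
move=> cd lt_dc.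
have cb : c != b by rewrite -(depth_eq0 reaches_b) -lt0n (leq_ltn_trans _ lt_dc).
have [c_pc depth_c] := parentP reaches_b cb.
have depth_d : depth d = depth (parent c).
  have := depth_edge reaches_b cd; rewrite depth_c ltnS => le_pc_d.
  by apply/eqP; rewrite eqn_leq le_pc_d andbT -ltnS -depth_c.
apply/eqP/contraT => pc_d.
have := no_path_above_level (w := [:: c]) erefl (esym depth_d).
rewrite eq_sym pc_d => /(_ isT); rewrite /= cd e_sym c_pc andbT.
apply=> [z|]; first by rewrite inE => /eqP->.
by rewrite inE; apply/eqP => pc_c; move: depth_c; rewrite pc_c; apply: n_Sn.
Qed.

Lemma depth_edge_neq c d : e c d -> depth c != depth d.
Proof.
move=> cd; apply/eqP => depth_cd.
have dc : d != c by apply: contraTneq cd => ->; rewrite e_irr.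
have nil_above : {in [::], forall z, depth c < depth z} by [].
by have := no_path_above_level (esym depth_cd) erefl dc nil_above isT; rewrite /= cd.
Qed.

Lemma to_root_edge c d f : e c d -> f c = 0%R -> (0 <= f d)%R ->
  to_root c f = to_root d (cross c d f).
Proof.
move=> cd fc fd; have c_neq_d : c != d by apply: contraTneq cd => ->; rewrite e_irr.
have := depth_edge_neq cd; rewrite neq_ltn => /orP[lt_cd | lt_dc].
  have dc : e d c by rewrite e_sym.
  have db : d != b by rewrite -(depth_eq0 reaches_b) -lt0n (leq_ltn_trans _ lt_cd).
  rewrite (to_root_parent _ _ db) (parent_unique dc lt_cd) cross_cross //.
  by case: Rle_dec => // []; rewrite /cross (negPf c_neq_d) eqxx.
have cb : c != b by rewrite -(depth_eq0 reaches_b) -lt0n (leq_ltn_trans _ lt_dc).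
by rewrite (to_root_parent _ _ cb) (parent_unique cd lt_dc); case: Rle_dec.
Qed.

Definition point_root (p : Lpt V) : option (V -> R) := to_root (projT1 p) (coord (projT2 p)).

Lemma point_root_glue p q : edge_glue e p q -> point_root p = point_root q.
Proof.
case: p q => [c x] [d y] [cd xy x_pos x_other]; rewrite /point_root /=.
have -> : coord y = cross c d (coord x).
  apply: functional_extensionality => w; rewrite /cross.
  case: (eqVneq w d) => [->|wd]; first exact: coord_hole.
  by case: (eqVneq w c) => [->|wc]; [rewrite xy | rewrite x_other].
exact: to_root_edge cd (coord_hole x) x_pos.
Qed.

Lemma point_root_Lequiv p q : Lequiv e p q -> point_root p = point_root q.
Proof. by elim=> [? ? /point_root_glue | | ? ? _ -> | ? ? ? _ -> _ ->]. Qed.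

Lemma Lequiv_ptE c (x : chart c) (y : chart b) :
  Lequiv e (pt x) (pt y) <-> to_root c (coord x) = Some (coord y).
Proof.
split=> [/point_root_Lequiv | /Lequiv_to_root]; last by rewrite !pt_coord.
by rewrite /point_root /= to_root_b.
Qed.

Lemma to_root_min_path c s f g : is_min_path e c b s ->
  to_root c f = Some g <-> pos_path c s f /\ cross_path c s f = g.
Proof.
elim: s c f => [|d s IH] c f p_cs.
  by case: p_cs => _ /= -> _; rewrite to_root_b; split=> [[->] | [_ ->]].
have [cd p_ds] := min_path_cons p_cs.
have lt_dc : depth d < depth c.
  by rewrite (min_path_depth reaches_b p_cs) (min_path_depth reaches_b p_ds).
have cb : c != b by rewrite -(depth_eq0 reaches_b) -lt0n (leq_ltn_trans _ lt_dc).
rewrite to_root_parent // (parent_unique cd lt_dc) /=.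
by case: Rle_dec => [fd | not_fd]; [rewrite IH; tauto | split=> [|[[]]]].
Qed.

Lemma Lequiv_along_min_path c s (x : chart c) (y : chart b) : is_min_path e c b s ->
  Lequiv e (pt x) (pt y) <->
  {in s, forall z, (0 <= coord x z)%R} /\ shifted_along c s (coord x) (coord y).
Proof.
move=> p_cs; have u_cs := min_path_uniq reaches_b p_cs.
by rewrite Lequiv_ptE (to_root_min_path _ _ p_cs) pos_pathP // cross_pathP // coord_hole.
Qed.
End Tree.

Theorem lemma2p6 (V : finType) (e : rel V) (hT : is_tree e) (a b : V)
  (hab : a != b) (s : seq V) (hs : is_min_path e a b s)
  (x : chart a) (y : chart b) :
  Lequiv e (pt x) (pt y) <->
  ((forall i : nat, (i < size s)%N ->
       coord x (nth a s i) = coord y (nth a (a :: s) i) /\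
       (0 <= coord x (nth a s i))%R) /\
   (forall g : V, g \notin a :: s -> coord x g = coord y g)).
Proof.
have y_last : coord y (last a s) = 0%R by case: (hs) => _ -> _; apply: coord_hole.
rewrite (Lequiv_along_min_path hT x y hs); split.
  move=> [x_pos [y_shift _ y_out]]; split=> [i lt_i | w w_out]; last by rewrite y_out.
  by rewrite y_shift //; split=> //; apply/x_pos/mem_nth.
move=> [xy_path xy_out]; split=> [z zs | ].
  by rewrite -(nth_index a zs); apply: (xy_path _ _).2; rewrite index_mem.
by split=> // [i lt_i | w w_out]; [rewrite (xy_path i lt_i).1 | rewrite xy_out].
Qed.
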